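(* If $\gamma\in\mathcal{M}_k\otimes\mathcal{M}_m$ is a state with $\gamma^\Gamma\ge0$ (positive under partial transpose), then $\gamma\in CR_{k,m}$.
   Context: $\mathcal{M}_k$ denotes the complex $k\times k$ matrices, and $\mathcal{M}_k\otimes\mathcal{M}_m$ is identified with $\mathcal{M}_{km}$ via the Kronecker product. A state is a positive semidefinite Hermitian matrix (not necessarily of trace one). The partial transpose of $\gamma=\sum_iA_i\otimes B_i$ is $\gamma^\Gamma=\sum_iA_i\otimes B_i^t$. For $\gamma=\sum_{i=1}^nA_i\otimes B_i\in\mathcal{M}_k\otimes\mathcal{M}_m$ define $G_\gamma:\mathcal{M}_k\to\mathcal{M}_m$, $G_\gamma(X)=\sum_i\mathrm{tr}(A_iX)B_i$, and $F_\gamma:\mathcal{M}_m\to\mathcal{M}_k$, $F_\gamma(Y)=\sum_i\mathrm{tr}(B_iY)A_i$. A linear map is positive if it maps positive semidefinite matrices to positive semidefinite matrices, and self-adjoint if self-adjoint with respect to $\langle X,Y\rangle=\mathrm{tr}(XY^* )$. For orthogonal projections $V,W$, $V\mathcal{M}_kW=\{VXW:X\in\mathcal{M}_k\}$. Given an orthogonal projection $V\in\mathcal{M}_k$ and a positive map $T:V\mathcal{M}_kV\to V\mathcal{M}_kV$, $T$ is irreducible if the only orthogonal projections $W$ with $W\mathcal{M}_kW\subseteq V\mathcal{M}_kV$ and $T(W\mathcal{M}_kW)\subseteq W\mathcal{M}_kW$ are $W=0$ and $W=V$. A self-adjoint positive map $T:\mathcal{M}_k\to\mathcal{M}_k$ is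 completely reducible if there are orthogonal projections $W_1,\dots,W_l$ with $W_iW_j=0$ for $i\ne j$, $T(W_i\mathcal{M}_kW_i)\subseteq W_i\mathcal{M}_kW_i$ and $T|_{W_i\mathcal{M}_kW_i}$ irreducible for every $i$, and $T|_R\equiv0$, where $R$ is the orthogonal complement (trace inner product) of $\bigoplus_iW_i\mathcal{M}_kW_i$ in $\mathcal{M}_k$. $CR_{k,m}$ is the set of states $\gamma\in\mathcal{M}_k\otimes\mathcal{M}_m$ such that $F_\gamma\circ G_\gamma:\mathcal{M}_k\to\mathcal{M}_k$ is completely reducible. *)

(* Complex scalars: an arbitrary numClosedFieldType C
   (the complex numbers are an instance; the statement is stated for all such C). *)
From HB Require Import structures.
From mathcomp Require Import all_boot all_order all_algebra.
From mathcomp Require Import mxtens.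
Set Implicit Arguments. Unset Strict Implicit. Unset Printing Implicit Defensive.
Import Order.TTheory GRing.Theory Num.Theory.
Local Open Scope ring_scope.

Section Defs.
Variable C : numClosedFieldType.

Definition mxadj {p q} (A : 'M[C]_(p, q)) : 'M[C]_(q, p) := map_mx Num.conj (A^T).

(* positive semidefinite Hermitian matrix ("state", trace not normalised) *)
Definition psd {n} (A : 'M[C]_n) : Prop :=
  mxadj A = A /\ forall v : 'rV[C]_n, 0 <= (v *m A *m mxadj v) 0 0.

(* Kronecker identification M_k (x) M_m = M_{km}: the index (i,j) is
   mxtens_index (i,j), so that (A *t B) (i,j) (i',j') = A i i' * B j j'. *)
Definition tidx {k m} (i : 'I_k) (j : 'I_m) : 'I_(k * m) := mxtens_index (i, j).

(* partial transpose: (sum A_i (x) B_i)^Gamma = sum A_i (x) B_i^T, entrywise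
   gamma^Gamma((i,j),(i',j')) = gamma((i,j'),(i',j)) *)
Definition ptrans {k m} (g : 'M[C]_(k * m)) : 'M[C]_(k * m) :=
  \matrix_(p, q) g (tidx (mxtens_unindex p).1 (mxtens_unindex q).2)
                   (tidx (mxtens_unindex q).1 (mxtens_unindex p).2).

(* G_gamma(X) = sum_i tr(A_i X) B_i, written entrywise *)
Definition Gmap {k m} (g : 'M[C]_(k * m)) (X : 'M[C]_k) : 'M[C]_m :=
  \matrix_(j, j') \sum_(i < k) \sum_(i' < k) g (tidx i j) (tidx i' j') * X i' i.

(* F_gamma(Y) = sum_i tr(B_i Y) A_i, written entrywise *)
Definition Fmap {k m} (g : 'M[C]_(k * m)) (Y : 'M[C]_m) : 'M[C]_k :=
  \matrix_(i, i') \sum_(j < m) \sum_(j' < m) g (tidx i j) (tidx i' j') * Y j' j.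

Definition positive_map {k} (T : 'M[C]_k -> 'M[C]_k) : Prop :=
  forall X, psd X -> psd (T X).

Definition selfadjoint_map {k} (T : 'M[C]_k -> 'M[C]_k) : Prop :=
  forall X Y, \tr (T X *m mxadj Y) = \tr (X *m mxadj (T Y)).

Definition orthproj {k} (P : 'M[C]_k) : Prop := P *m P = P /\ mxadj P = P.

Definition corner_sub {k} (W V : 'M[C]_k) : Prop :=
  forall X, exists Y, W *m X *m W = V *m Y *m V.

Definition corner_invariant {k} (T : 'M[C]_k -> 'M[C]_k) (W : 'M[C]_k) : Prop :=
  forall X, exists Y, T (W *m X *m W) = W *m Y *m W.

Definition irreducible_on {k} (T : 'M[C]_k -> 'M[C]_k) (V : 'M[C]_k) : Prop :=
  forall W, orthproj W -> corner_sub W V -> corner_invariant T W ->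
    W = 0 \/ W = V.

Definition completely_reducible {k} (T : 'M[C]_k -> 'M[C]_k) : Prop :=
  selfadjoint_map T /\ positive_map T /\
  exists (l : nat) (W : 'I_l -> 'M[C]_k),
    [/\ forall i, orthproj (W i),
        forall i j, i != j -> W i *m W j = 0,
        forall i, corner_invariant T (W i),
        forall i, irreducible_on T (W i)
      & forall X, (forall i Y, \tr (X *m mxadj (W i *m Y *m W i)) = 0) -> T X = 0].

Definition CR {k m} (g : 'M[C]_(k * m)) : Prop :=
  psd g /\ completely_reducible (Fmap g \o Gmap g).

End Defs.

(* Let T = F o G and let W be a projection with T (W M_k W) in W M_k W, W' = 1 - W.
   Then tr (G(W') G(W)) = tr (W' T(W)) = 0, so G(W') and G(W) are orthogonal
   positive matrices; if R is the range projection of G(W), the state gamma is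
   annihilated by W (x) (1 - R) and W' (x) R.  Positivity of the partial transpose
   then also kills the blocks between W (x) R and W' (x) (1 - R), so gamma is block
   diagonal for them.  Consequently T sends W X W' to 0 and leaves W' M_k W'
   invariant, and splitting invariant projections until they are irreducible
   (by induction on the rank) yields the decomposition required by complete
   reducibility. *)

From HB Require Import structures.
From mathcomp Require Import all_boot all_order all_algebra.
From mathcomp Require Import mxtens ring.
From Stdlib Require Import Classical.
Set Implicit Arguments. Unset Strict Implicit. Unset Printing Implicit Defensive.
Import Order.TTheory GRing.Theory Num.Theory.
Local Open Scope ring_scope.

Section AdjointTrace.
Variable C : numClosedFieldType.

Lemma mxadjK p q (A : 'M[C]_(p, q)) : mxadj (mxadj A) = A.
Proof. by apply/matrixP=> i j; rewrite !mxE conjCK. Qed.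

Lemma mxadjM p q r (A : 'M[C]_(p, q)) (B : 'M[C]_(q, r)) :
  mxadj (A *m B) = mxadj B *m mxadj A.
Proof. by rewrite /mxadj trmx_mul map_mxM. Qed.

Lemma mxadjB p q (A B : 'M[C]_(p, q)) : mxadj (A - B) = mxadj A - mxadj B.
Proof. by rewrite /mxadj linearB /= map_mxB. Qed.

Lemma mxadj0 p q : mxadj (0 : 'M[C]_(p, q)) = 0.
Proof. by rewrite -(subrr 0) mxadjB subrr. Qed.

Lemma mxadj1 n : mxadj (1%:M : 'M[C]_n) = 1%:M.
Proof. by rewrite /mxadj tr_scalar_mx map_scalar_mx /= conjC1. Qed.

Lemma mxadj_trmx p q (A : 'M[C]_(p, q)) : mxadj A^T = (mxadj A)^T.
Proof. by apply/matrixP=> i j; rewrite !mxE. Qed.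

Lemma mxadj_tens p q r s (A : 'M[C]_(p, q)) (B : 'M[C]_(r, s)) :
  mxadj (A *t B) = mxadj A *t mxadj B.
Proof. by rewrite /mxadj trmx_tens map_mxT. Qed.

Lemma mxadjM_herm n (A B : 'M[C]_n) :
  mxadj A = A -> mxadj B = B -> mxadj (A *m B) = B *m A.
Proof. by move=> hA hB; rewrite mxadjM hA hB. Qed.

Lemma mxtrace_adj n (A : 'M[C]_n) : \tr (mxadj A) = (\tr A)^*.
Proof. by rewrite /mxtrace rmorph_sum; apply: eq_bigr => i _; rewrite !mxE. Qed.

Lemma mxtrace_mul_adj p q (A : 'M[C]_(p, q)) :
  \tr (A *m mxadj A) = \sum_i \sum_j `|A i j| ^+ 2.
Proof.
apply: eq_bigr => i _; rewrite mxE; apply: eq_bigr => j _.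
by rewrite !mxE -normCK.
Qed.

Lemma mxtrace_mul_adj_ge0 p q (A : 'M[C]_(p, q)) : 0 <= \tr (A *m mxadj A).
Proof.
by rewrite mxtrace_mul_adj; do 2![apply: sumr_ge0 => ? _]; rewrite exprn_ge0.
Qed.

Lemma mxtrace_mul_adj_eq0 p q (A : 'M[C]_(p, q)) :
  \tr (A *m mxadj A) = 0 -> A = 0.
Proof.
have sq_ge0 i j : 0 <= `|A i j| ^+ 2 by rewrite exprn_ge0.
rewrite mxtrace_mul_adj => /eqP; rewrite psumr_eq0 => [/allP A0|i _]; last first.
  exact: sumr_ge0.
apply/matrixP => i j; have /implyP/(_ isT) := A0 i (mem_index_enum _).
rewrite psumr_eq0 // => /allP/(_ j (mem_index_enum _))/implyP/(_ isT).
by rewrite expf_eq0 normr_eq0 mxE => /eqP.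
Qed.

Lemma mxtrace_mul_delta n (M : 'M[C]_n) i j : \tr (M *m delta_mx j i) = M i j.
Proof.
rewrite /mxtrace (bigD1 i) //= big1 ?addr0 => [|a /negbTE na].
  rewrite mxE (bigD1 j) //= big1 ?addr0 => [|b /negbTE nb].
    by rewrite !mxE !eqxx mulr1.
  by rewrite !mxE nb mulr0.
by rewrite mxE big1 // => b _; rewrite mxE na andbF mulr0.
Qed.

Lemma mxtrace_mul_inj n (M N : 'M[C]_n) :
  (forall Y, \tr (M *m Y) = \tr (N *m Y)) -> M = N.
Proof. by move=> MN; apply/matrixP=> i j; rewrite -!mxtrace_mul_delta MN. Qed.

End AdjointTrace.

Section PositiveSemidefinite.
Variable C : numClosedFieldType.

Lemma mxtrace11 (M : 'M[C]_1) : \tr M = M 0 0.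
Proof. exact: big_ord1. Qed.

Lemma psd_adjmx_mul p n (H : 'M[C]_(p, n)) : psd (mxadj H *m H).
Proof.
split=> [|v]; first by rewrite mxadjM mxadjK.
rewrite -mxtrace11 mulmxA -mulmxA -[H *m _]mxadjK mxadjM mxadjK.
exact: mxtrace_mul_adj_ge0.
Qed.

Lemma psd_factor n (A : 'M[C]_n) : psd A -> exists H : 'M[C]_n, A = mxadj H *m H.
Proof.
case=> hA pA; set P := spectralmx A; set d := spectral_diag A.
have nA : A \is normalmx.
  by apply/normalmxP; have -> : map_mx Num.conj A^T = A := hA.
have PP : P *m mxadj P = 1%:M := unitarymxP (spectral_unitarymx A).
have eA : A = mxadj P *m diag_mx d *m P.
  by rewrite {1}(orthomx_spectralP nA) invmx_unitary // spectral_unitarymx.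
have d_ge0 i : 0 <= d 0 i.
  have := pA (row i P); rewrite rowE mxadjM eA !mulmxA -!(mulmxA _ P) PP !mulmx1.
  have -> : mxadj (delta_mx 0 i) = delta_mx i 0 :> 'cV[C]_n.
    apply/matrixP=> a b; rewrite !mxE.
    by case: eqP; case: eqP; rewrite ?conjC1 ?conjC0.
  by rewrite -rowE -colE !mxE eqxx mulr1n.
exists (diag_mx (\row_j sqrtC (d 0 j)) *m P).
rewrite mxadjM /mxadj tr_diag_mx map_diag_mx -/(mxadj P) eA -!mulmxA.
congr (_ *m _); rewrite !mulmxA mulmx_diag; congr (_ *m _); congr diag_mx.
apply/rowP=> j; rewrite !mxE -{1}(sqrtCK (d 0 j)) expr2; congr (_ * _).
by apply/esym/geC0_conj; rewrite sqrtC_ge0.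
Qed.

Lemma psd_tens p q (X : 'M[C]_p) (Y : 'M[C]_q) : psd X -> psd Y -> psd (X *t Y).
Proof.
move=> /psd_factor[H ->] /psd_factor[K ->].
by rewrite -tensmx_mul -mxadj_tens; apply: psd_adjmx_mul.
Qed.

Lemma orthproj_psd n (P : 'M[C]_n) : orthproj P -> psd P.
Proof. by case=> PP hP; rewrite -PP -{1}hP; apply: psd_adjmx_mul. Qed.

Section Product.
Variables (n : nat) (A B : 'M[C]_n).
Hypotheses (pA : psd A) (pB : psd B).

(* Writing A = H^* H and B = K^* K, tr (A B) is the squared Frobenius norm of H K^*. *)
Let mul_factor : exists M : 'M[C]_n,
  \tr (A *m B) = \tr (M *m mxadj M) /\ (M = 0 -> A *m B = 0).
Proof.
have [[H eA] [K eB]] := (psd_factor pA, psd_factor pB).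
exists (H *m mxadj K); rewrite eA eB mxadjM mxadjK; split.
  by rewrite -!mulmxA mxtrace_mulC !mulmxA.
by move=> HK0; rewrite -mulmxA (mulmxA H) HK0 mul0mx mulmx0.
Qed.

Lemma psd_mxtrace_mul_ge0 : 0 <= \tr (A *m B).
Proof. by have [M [-> _]] := mul_factor; apply: mxtrace_mul_adj_ge0. Qed.

Lemma psd_mxtrace_mul_eq0 : \tr (A *m B) = 0 -> A *m B = 0.
Proof. by have [M [-> AB0]] := mul_factor => /mxtrace_mul_adj_eq0. Qed.

End Product.

End PositiveSemidefinite.

Lemma exchange_big2 (R : nmodType) (I J K L : finType) (F : I -> J -> K -> L -> R) :
  \sum_i \sum_j \sum_k \sum_l F i j k l = \sum_k \sum_l \sum_i \sum_j F i j k l.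
Proof.
under eq_bigr do rewrite exchange_big.
rewrite exchange_big; apply: eq_bigr => k _.
by under eq_bigr do rewrite exchange_big; rewrite exchange_big.
Qed.

Section PartialMaps.
Variables (C : numClosedFieldType) (k m : nat).
Implicit Types (g : 'M[C]_(k * m)) (X : 'M[C]_k) (Y : 'M[C]_m).

Lemma sum_tidx (F : 'I_(k * m) -> C) : \sum_p F p = \sum_i \sum_j F (tidx i j).
Proof.
rewrite pair_big /=; apply: reindex; exists (@mxtens_unindex k m) => p _.
  by rewrite /tidx mxtens_indexK; case: p.
by rewrite /tidx -surjective_pairing mxtens_unindexK.
Qed.

Lemma mxtrace_mul_tens g X Y : \tr (g *m (X *t Y)) =
  \sum_i \sum_i' \sum_j \sum_j' g (tidx i j) (tidx i' j') * X i' i * Y j' j.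
Proof.
rewrite /mxtrace sum_tidx; apply: eq_bigr => i _.
under eq_bigr do rewrite mxE sum_tidx.
rewrite exchange_big; apply: eq_bigr => i' _; apply: eq_bigr => j _.
by apply: eq_bigr => j' _; rewrite tensmxE mulrA.
Qed.

Lemma mxtrace_Gmap g X Y : \tr (Gmap g X *m Y) = \tr (g *m (X *t Y)).
Proof.
rewrite mxtrace_mul_tens /mxtrace.
under eq_bigr do (rewrite mxE; under eq_bigr do rewrite !mxE !mulr_suml).
under eq_bigr do under eq_bigr do under eq_bigr do rewrite mulr_suml.
by rewrite exchange_big2.
Qed.

Lemma mxtrace_Fmap g X Y : \tr (Fmap g Y *m X) = \tr (g *m (X *t Y)).
Proof.
rewrite mxtrace_mul_tens; apply: eq_bigr => i _; rewrite mxE.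
apply: eq_bigr => i' _; rewrite !mxE mulr_suml; apply: eq_bigr => j _.
by rewrite mulr_suml; apply: eq_bigr => j' _; rewrite mulrAC.
Qed.

Lemma mxtrace_ptrans g X Y : \tr (ptrans g *m (X *t Y)) = \tr (g *m (X *t Y^T)).
Proof.
rewrite !mxtrace_mul_tens; apply: eq_bigr => i _; apply: eq_bigr => i' _.
rewrite exchange_big; apply: eq_bigr => j _; apply: eq_bigr => j' _.
by rewrite /ptrans !mxE /tidx !mxtens_indexK.
Qed.

Lemma tensmx_delta (i i' : 'I_k) (j j' : 'I_m) :
  delta_mx (tidx i j) (tidx i' j') = delta_mx i i' *t (delta_mx j j' : 'M[C]_m).
Proof.
apply/matrixP=> p q; case: (mxtens_indexP p) => a b; case: (mxtens_indexP q) => a' b'.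
rewrite tensmxE !mxE /tidx !(inj_eq (can_inj (@mxtens_indexK _ _))) !xpair_eqE.
by do 4!case: eqP => _; rewrite ?mulr1 ?mulr0.
Qed.

Lemma mxtrace_tens_inj (M N : 'M[C]_(k * m)) :
  (forall X Y, \tr (M *m (X *t Y)) = \tr (N *m (X *t Y))) -> M = N.
Proof.
move=> MN; apply/matrixP => p q; rewrite -!mxtrace_mul_delta.
case: (mxtens_indexP p) => i j; case: (mxtens_indexP q) => i' j'.
by rewrite tensmx_delta MN.
Qed.

Lemma Gmap_is_linear g : linear (Gmap g).
Proof.
move=> a X X'; apply/matrixP => j j'; rewrite !mxE big_distrr -big_split.
apply: eq_bigr => i _; rewrite big_distrr -big_split; apply: eq_bigr => i' _.
by rewrite !mxE mulrDr mulrCA.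
Qed.

HB.instance Definition _ g := GRing.isLinear.Build C 'M[C]_k 'M[C]_m _ (Gmap g)
  (Gmap_is_linear g).

Lemma Fmap_is_linear g : linear (Fmap g).
Proof.
move=> a Y Y'; apply/matrixP => i i'; rewrite !mxE big_distrr -big_split.
apply: eq_bigr => j _; rewrite big_distrr -big_split; apply: eq_bigr => j' _.
by rewrite !mxE mulrDr mulrCA.
Qed.

HB.instance Definition _ g := GRing.isLinear.Build C 'M[C]_m 'M[C]_k _ (Fmap g)
  (Fmap_is_linear g).

Lemma Gmap_addl g1 g2 X : Gmap (g1 + g2) X = Gmap g1 X + Gmap g2 X.
Proof.
apply/matrixP => j j'; rewrite !mxE -big_split; apply: eq_bigr => i _.
by rewrite -big_split; apply: eq_bigr => i' _; rewrite mxE mulrDl.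
Qed.

Lemma Fmap_addl g1 g2 Y : Fmap (g1 + g2) Y = Fmap g1 Y + Fmap g2 Y.
Proof.
apply/matrixP => i i'; rewrite !mxE -big_split; apply: eq_bigr => j _.
by rewrite -big_split; apply: eq_bigr => j' _; rewrite mxE mulrDl.
Qed.

Lemma Gmap_conj g (A A' : 'M[C]_k) (B B' : 'M[C]_m) X :
  Gmap ((A *t B) *m g *m (A' *t B')) X = B *m Gmap g (A' *m X *m A) *m B'.
Proof.
apply: mxtrace_mul_inj => Y; rewrite mxtrace_Gmap -!mulmxA mxtrace_mulC -!mulmxA.
by rewrite !tensmx_mul -mxtrace_Gmap [RHS]mxtrace_mulC -!mulmxA.
Qed.

Lemma Fmap_conj g (A A' : 'M[C]_k) (B B' : 'M[C]_m) Y :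
  Fmap ((A *t B) *m g *m (A' *t B')) Y = A *m Fmap g (B' *m Y *m B) *m A'.
Proof.
apply: mxtrace_mul_inj => X; rewrite mxtrace_Fmap -!mulmxA mxtrace_mulC -!mulmxA.
by rewrite !tensmx_mul -mxtrace_Fmap [RHS]mxtrace_mulC -!mulmxA.
Qed.

Lemma Gmap_adj g X : mxadj (Gmap g X) = Gmap (mxadj g) (mxadj X).
Proof.
apply: mxtrace_mul_inj => Y; rewrite [RHS]mxtrace_Gmap -[Y in LHS]mxadjK -mxadjM.
rewrite mxtrace_adj mxtrace_mulC mxtrace_Gmap -mxtrace_adj.
by rewrite mxadjM mxadj_tens mxadjK mxtrace_mulC.
Qed.

Lemma Fmap_adj g Y : mxadj (Fmap g Y) = Fmap (mxadj g) (mxadj Y).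
Proof.
apply: mxtrace_mul_inj => X; rewrite [RHS]mxtrace_Fmap -[X in LHS]mxadjK -mxadjM.
rewrite mxtrace_adj mxtrace_mulC mxtrace_Fmap -mxtrace_adj.
by rewrite mxadjM mxadj_tens mxadjK mxtrace_mulC.
Qed.

Lemma ptrans_conj g (A A' : 'M[C]_k) (B B' : 'M[C]_m) :
  ptrans ((A *t B) *m g *m (A' *t B')) = (A *t B'^T) *m ptrans g *m (A' *t B^T).
Proof.
apply: mxtrace_tens_inj => X Y; rewrite mxtrace_ptrans -!mulmxA mxtrace_mulC.
rewrite -!mulmxA !tensmx_mul [RHS]mxtrace_mulC -!mulmxA !tensmx_mul mxtrace_ptrans.
by rewrite !trmx_mul !trmxK !mulmxA.
Qed.

Lemma ptransK : involutive (@ptrans C k m).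
Proof.
move=> g; apply/matrixP => p q.
case: (mxtens_indexP p) => i j; case: (mxtens_indexP q) => i' j'.
by rewrite !mxE /tidx !mxtens_indexK.
Qed.

Lemma ptrans0 : ptrans (0 : 'M[C]_(k * m)) = 0.
Proof. by apply/matrixP => p q; rewrite !mxE. Qed.

End PartialMaps.

Section PositiveMaps.
Variables (C : numClosedFieldType) (k m : nat) (g : 'M[C]_(k * m)).
Hypothesis pg : psd g.

Lemma Gmap_psd X : psd X -> psd (Gmap g X).
Proof.
move=> pX; split=> [|v]; first by rewrite Gmap_adj pg.1 pX.1.
rewrite -mxtrace11 mxtrace_mulC mulmxA mxtrace_mulC mxtrace_Gmap.
by apply: psd_mxtrace_mul_ge0 => //; apply: psd_tens => //; apply: psd_adjmx_mul.
Qed.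

Lemma Fmap_psd Y : psd Y -> psd (Fmap g Y).
Proof.
move=> pY; split=> [|v]; first by rewrite Fmap_adj pg.1 pY.1.
rewrite -mxtrace11 mxtrace_mulC mulmxA mxtrace_mulC mxtrace_Fmap.
by apply: psd_mxtrace_mul_ge0 => //; apply: psd_tens => //; apply: psd_adjmx_mul.
Qed.

Lemma FGmap_positive : positive_map (Fmap g \o Gmap g).
Proof. by move=> X pX; apply/Fmap_psd/Gmap_psd. Qed.

Lemma FGmap_selfadjoint : selfadjoint_map (Fmap g \o Gmap g).
Proof.
move=> X Y /=; rewrite mxtrace_Fmap -mxtrace_Gmap Fmap_adj Gmap_adj pg.1.
by rewrite [RHS]mxtrace_mulC mxtrace_Fmap -mxtrace_Gmap mxtrace_mulC.
Qed.

End PositiveMaps.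

Section Projections.
Variables (C : numClosedFieldType) (n : nat).
Implicit Types P Q V W : 'M[C]_n.

Lemma orthproj1 : orthproj (1%:M : 'M[C]_n).
Proof. by split; [rewrite mulmx1 | apply: mxadj1]. Qed.

Lemma orthproj_compl W : orthproj W -> orthproj (1%:M - W).
Proof.
case=> WW hW; split; last by rewrite mxadjB mxadj1 hW.
by rewrite mulmxBl mul1mx mulmxBr mulmx1 WW subrr subr0.
Qed.

Lemma orthproj_mul_compl W : orthproj W -> W *m (1%:M - W) = 0 /\ (1%:M - W) *m W = 0.
Proof. by case=> WW _; rewrite mulmxBl mulmxBr mul1mx mulmx1 WW subrr. Qed.

Lemma orthproj_trmx W : orthproj W -> orthproj W^T.
Proof. by case=> WW hW; split; rewrite -?trmx_mul ?WW // mxadj_trmx hW. Qed.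

Lemma orthproj_tens p (P : 'M[C]_p) W : orthproj P -> orthproj W -> orthproj (P *t W).
Proof.
by case=> PP hP [WW hW]; split; rewrite ?tensmx_mul ?PP ?WW // mxadj_tens hP hW.
Qed.

Lemma orthproj_sub V W : orthproj V -> orthproj W -> V *m W = W -> orthproj (V - W).
Proof.
move=> [VV hV] [WW hW] VW; have WV : W *m V = W by rewrite -(mxadjM_herm hV hW) VW.
split; last by rewrite mxadjB hV hW.
by rewrite mulmxBl !mulmxBr VV WW VW WV subrr subr0.
Qed.

Lemma corner_sub_mul V W : orthproj V -> orthproj W -> corner_sub W V -> V *m W = W.
Proof.
move=> [VV _] [WW _] /(_ 1%:M) [Y]; rewrite mulmx1 WW => ->.
by rewrite !mulmxA VV.
Qed.

Lemma mxrank_orthproj_lt V W : orthproj V -> orthproj W -> V *m W = W -> W != V ->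
  (\rank W < \rank V)%N.
Proof.
move=> [VV hV] [WW hW] VW; apply: contraNT; rewrite -leqNgt => rVW.
have WV : W *m V = W by rewrite -(mxadjM_herm hV hW) VW hW.
have sWV : (W <= V)%MS by rewrite -WV submxMl.
have /submxP [E eV] : (V <= W)%MS.
  by rewrite -(mxrank_leqif_sup sWV).2 eqn_leq rVW mxrankS.
by apply/eqP; rewrite -VW {1}eV -mulmxA WW -eV.
Qed.

Lemma range_orthproj (S : 'M[C]_n) :
  exists R : 'M[C]_n, [/\ orthproj R, S *m R = S & exists D, R = D *m S].
Proof.
have [r [B [BB eB]]] : exists r (B : 'M[C]_(r, n)), B *m mxadj B = 1%:M /\ (B :=: S)%MS.
  exists (\rank S), (schmidt (row_base S)); split.
    exact/unitarymxP/schmidt_unitarymx/rank_leq_col.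
  exact: eqmx_trans (eqmx_schmidt_free (row_base_free S)) (eq_row_base S).
exists (mxadj B *m B); split.
- by split; [rewrite mulmxA -(mulmxA _ B) BB mulmx1 | rewrite mxadjM mxadjK].
- have /submxP [E ->] : (S <= B)%MS by rewrite eB.
  by rewrite mulmxA -(mulmxA E) BB mulmx1.
- by apply/submxP; rewrite -eB submxMl.
Qed.

Lemma mxtrace_corner W X : orthproj W ->
  \tr (W *m X *m W *m mxadj (W *m X *m W)) = \tr (X *m mxadj (W *m X *m W)).
Proof.
case=> WW hW; set M := mxadj (W *m X *m W).
have WM : W *m M = M by rewrite /M !mxadjM hW !mulmxA WW.
have MW : M *m W = M by rewrite /M !mxadjM hW -!mulmxA WW.
by rewrite -mulmxA WM mxtrace_mulC mulmxA MW mxtrace_mulC.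
Qed.

End Projections.

Lemma tensmx_compl (R : comNzRingType) p q (A : 'M[R]_p) (B : 'M[R]_q) :
  A *t B + (1%:M - A) *t (1%:M - B) + A *t (1%:M - B) + (1%:M - A) *t B = 1%:M.
Proof.
apply/matrixP => r s; case: (mxtens_indexP r) => i j; case: (mxtens_indexP s) => i' j'.
rewrite !mxE !mxtens_indexK /= (inj_eq (can_inj (@mxtens_indexK _ _))) xpair_eqE.
by case: eqP; case: eqP => _ _ /=; ring.
Qed.

Section InvariantCorner.
Variables (C : numClosedFieldType) (k m : nat) (g : 'M[C]_(k * m)).
Hypotheses (pg : psd g) (pgT : psd (ptrans g)).
Local Notation T := (Fmap g \o Gmap g).

Lemma tens_orthproj_mul_eq0 P Q : orthproj P -> orthproj Q ->
  Gmap g P *m Q = 0 -> g *m (P *t Q) = 0 /\ (P *t Q) *m g = 0.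
Proof.
move=> hP hQ PQ0; have hPQ := orthproj_tens hP hQ.
have gPQ : g *m (P *t Q) = 0.
  apply: psd_mxtrace_mul_eq0 => //; first exact: orthproj_psd.
  by rewrite -mxtrace_Gmap PQ0 mxtrace0.
by rewrite -(mxadjM_herm pg.1 hPQ.2) gPQ mxadj0.
Qed.

Variable W : 'M[C]_k.
Hypotheses (hW : orthproj W) (W_inv : corner_invariant T W).
Local Notation W' := (1%:M - W).

Lemma Gmap_compl_orthogonal : Gmap g W' *m Gmap g W = 0.
Proof.
apply: psd_mxtrace_mul_eq0; first exact/Gmap_psd/orthproj_psd/orthproj_compl.
  exact/Gmap_psd/orthproj_psd.
have [Y TW] := W_inv 1%:M; rewrite mulmx1 hW.1 /= in TW.
rewrite mxtrace_Gmap -mxtrace_Fmap TW -mulmxA (orthproj_mul_compl hW).1.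
by rewrite mulmx0 mxtrace0.
Qed.

Lemma invariant_corner_block_diagonal : exists R : 'M[C]_m, orthproj R /\
  g = (W *t R) *m g *m (W *t R) + (W' *t (1%:M - R)) *m g *m (W' *t (1%:M - R)).
Proof.
have [R [hR GWR [D eR]]] := range_orthproj (Gmap g W).
exists R; split => //.
have [hW' hR'] := (orthproj_compl hW, orthproj_compl hR).
have GW'R : Gmap g W' *m R = 0.
  rewrite -hR.2 eR mxadjM (Gmap_psd pg (orthproj_psd hW)).1 mulmxA.
  by rewrite Gmap_compl_orthogonal mul0mx.
have GWR' : Gmap g W *m (1%:M - R) = 0 by rewrite mulmxBr mulmx1 GWR subrr.
have [g_WR' WR'_g] := tens_orthproj_mul_eq0 hW hR' GWR'.
have [g_W'R W'R_g] := tens_orthproj_mul_eq0 hW' hR GW'R.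
have hP := orthproj_tens hW (orthproj_trmx hR').
have gTP : ptrans g *m (W *t (1%:M - R)^T) = 0.
  apply: psd_mxtrace_mul_eq0 => //; first exact: orthproj_psd.
  by rewrite mxtrace_ptrans trmxK g_WR' mxtrace0.
have WR_g_W'R' : (W *t R) *m g *m (W' *t (1%:M - R)) = 0.
  rewrite -[LHS]ptransK ptrans_conj -(mxadjM_herm pgT.1 hP.2) gTP mxadj0.
  by rewrite !mul0mx ptrans0.
have W'R'_g_WR : (W' *t (1%:M - R)) *m g *m (W *t R) = 0.
  have := congr1 (@mxadj C _ _) WR_g_W'R'.
  by rewrite mxadj0 !mxadjM !mxadj_tens pg.1 hW.2 hR.2 hW'.2 hR'.2 mulmxA.
have sum1 := tensmx_compl W R.
have gL : (W *t R + W' *t (1%:M - R)) *m g = g.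
  by rewrite -{2}[g]mul1mx -sum1 !mulmxDl WR'_g W'R_g !addr0.
have gR : g *m (W *t R + W' *t (1%:M - R)) = g.
  by rewrite -{2}[g]mulmx1 -sum1 !mulmxDr g_WR' g_W'R !addr0.
by rewrite -{1}gR -{1}gL !mulmxDl !mulmxDr WR_g_W'R' W'R'_g_WR addr0 add0r.
Qed.

Lemma invariant_corner_reducing :
  (forall X, T (W *m X *m W') = 0) /\ corner_invariant T W'.
Proof.
have [R [hR eg]] := invariant_corner_block_diagonal.
have [WW' W'W] := orthproj_mul_compl hW; have [RR' _] := orthproj_mul_compl hR.
have GE X : Gmap g X = R *m Gmap g (W *m X *m W) *m R +
    (1%:M - R) *m Gmap g (W' *m X *m W') *m (1%:M - R).
  by rewrite {1}eg Gmap_addl !Gmap_conj.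
have FE Y : Fmap g Y = W *m Fmap g (R *m Y *m R) *m W +
    W' *m Fmap g ((1%:M - R) *m Y *m (1%:M - R)) *m W'.
  by rewrite {1}eg Fmap_addl !Fmap_conj.
split=> X /=; rewrite GE.
  have -> : W *m (W *m X *m W') *m W = 0 by rewrite -!mulmxA W'W !mulmx0.
  have -> : W' *m (W *m X *m W') *m W' = 0 by rewrite !mulmxA W'W !mul0mx.
  by rewrite !linear0 !(mulmx0, mul0mx) addr0 linear0.
have -> : W *m (W' *m X *m W') *m W = 0 by rewrite !mulmxA WW' !mul0mx.
rewrite linear0 mulmx0 mul0mx add0r FE.
have -> : forall Z, R *m ((1%:M - R) *m Z *m (1%:M - R)) *m R = 0.
  by move=> Z; rewrite !mulmxA RR' !mul0mx.
by rewrite linear0 mulmx0 mul0mx add0r; eexists.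
Qed.

End InvariantCorner.

Section Decomposition.
Variables (C : numClosedFieldType) (n : nat) (T : {linear 'M[C]_n -> 'M[C]_n}).
Implicit Types P Q V W : 'M[C]_n.

Lemma corner_invariant1 : corner_invariant T 1%:M.
Proof. by move=> X; exists (T X); rewrite !mul1mx !mulmx1. Qed.

Lemma corner_invariant_mul P Q : P *m P = P -> Q *m Q = Q -> P *m Q = Q *m P ->
  corner_invariant T P -> corner_invariant T Q -> corner_invariant T (P *m Q).
Proof.
move=> PP QQ PQ iP iQ X; set Z := T _; exists Z.
have [Y ZP] : exists Y, Z = P *m Y *m P.
  by have [Y eY] := iP (Q *m X *m Q); exists Y; rewrite -eY /Z {2}PQ !mulmxA.
have [Y2 ZQ] : exists Y, Z = Q *m Y *m Q.
  by have [Y2 eY] := iQ (P *m X *m P); exists Y2; rewrite -eY /Z {1}PQ !mulmxA.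
have PZP : P *m Z *m P = Z by rewrite ZP !mulmxA PP -!mulmxA PP.
have QZQ : Q *m Z *m Q = Z by rewrite ZQ !mulmxA QQ -!mulmxA QQ.
by rewrite {2}PQ -[in LHS]PZP -[in LHS]QZQ !mulmxA.
Qed.

Lemma not_irreducible_on V : ~ irreducible_on T V ->
  exists W, [/\ orthproj W, corner_sub W V, corner_invariant T W, W != 0 & W != V].
Proof.
move=> redV; apply: NNPP => noW; apply: redV => W hW sWV iW.
have [-> | W0] := eqVneq W 0; first by left.
have [-> | WV] := eqVneq W V; first by right.
by case: noW; exists W.
Qed.

Definition irr_decomposition V (ws : seq 'M[C]_n) :=
  [/\ {in ws, forall w, [/\ orthproj w, corner_invariant T w & irreducible_on T w]},
      {in ws, forall w, V *m w = w},
      pairwise (fun A B => A *m B == 0) ws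
    & \sum_(w <- ws) w = V].

Lemma irr_decomposition_cat V1 V2 ws1 ws2 :
  orthproj V1 -> orthproj V2 -> V1 *m V2 = 0 ->
  irr_decomposition V1 ws1 -> irr_decomposition V2 ws2 ->
  irr_decomposition (V1 + V2) (ws1 ++ ws2).
Proof.
move=> hV1 hV2 V12 [irr1 sub1 orth1 sum1] [irr2 sub2 orth2 sum2].
have V21 : V2 *m V1 = 0 by rewrite -(mxadjM_herm hV1.2 hV2.2) V12 mxadj0.
split; last by rewrite big_cat sum1 sum2.
- by move=> w; rewrite mem_cat => /orP[/irr1 | /irr2].
- move=> w; rewrite mem_cat mulmxDl => /orP[w1 | w2].
    by rewrite -(sub1 _ w1) !mulmxA hV1.1 V21 mul0mx addr0.
  by rewrite -(sub2 _ w2) !mulmxA hV2.1 V12 mul0mx add0r.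
rewrite pairwise_cat orth1 orth2 !andbT; apply/allrelP => w1 w2 w1s w2s.
have [[_ hw1] _ _] := irr1 _ w1s.
have w1V1 : w1 *m V1 = w1 by rewrite -(mxadjM_herm hV1.2 hw1) sub1 ?hw1.
by rewrite -(sub2 _ w2s) -w1V1 -mulmxA (mulmxA V1) V12 mul0mx mulmx0.
Qed.

Hypothesis T_reducing : forall W, orthproj W -> corner_invariant T W ->
  (forall X, T (W *m X *m (1%:M - W)) = 0) /\ corner_invariant T (1%:M - W).

Lemma exists_irr_decomposition V :
  orthproj V -> corner_invariant T V -> exists ws, irr_decomposition V ws.
Proof.
have [r] := ubnP (\rank V); elim: r V => // r IH V /ltnSE rV hV iV.
have [irrV | /not_irreducible_on [W [hW sWV iW W0 WV]]] :=
  classic (irreducible_on T V).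
  exists [:: V]; split; rewrite ?big_seq1 // => w; rewrite inE => /eqP -> //.
  exact: hV.1.
have VW := corner_sub_mul hV hW sWV.
have WV' : W *m V = W by rewrite -(mxadjM_herm hV.2 hW.2) VW hW.2.
have hVW := orthproj_sub hV hW VW.
have iVW : corner_invariant T (V - W).
  have -> : V - W = V *m (1%:M - W) by rewrite mulmxBr mulmx1 VW.
  apply: corner_invariant_mul => //; first exact: hV.1.
  - exact: (orthproj_compl hW).1.
  - by rewrite mulmxBr mulmxBl mulmx1 mul1mx VW WV'.
  - exact: (T_reducing hW iW).2.
have [ws1 d1] := IH W (leq_trans (mxrank_orthproj_lt hV hW VW WV) rV) hW iW.
have VWV : V - W != V by rewrite -subr_eq0 addrAC subrr sub0r oppr_eq0.
have VVW : V *m (V - W) = V - W by rewrite mulmxBr hV.1 VW.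
have [ws2 d2] := IH _ (leq_trans (mxrank_orthproj_lt hV hVW VVW VWV) rV) hVW iVW.
exists (ws1 ++ ws2); rewrite -[V](subrK W) addrC.
apply: irr_decomposition_cat d1 d2 => //.
by rewrite mulmxBr WV' hW.1 subrr.
Qed.

Lemma reducing_orthogonal_decomposition : exists (l : nat) (W : 'I_l -> 'M[C]_n),
    [/\ forall i, orthproj (W i),
        forall i j, i != j -> W i *m W j = 0,
        forall i, corner_invariant T (W i),
        forall i, irreducible_on T (W i)
      & forall X, (forall i Y, \tr (X *m mxadj (W i *m Y *m W i)) = 0) -> T X = 0].
Proof.
have [ws [irr _ orth sum1]] :=
  exists_irr_decomposition (orthproj1 C n) corner_invariant1.
pose w := nth 0 ws.
have wP (i : 'I_(size ws)) := irr _ (mem_nth 0 (ltn_ord i)).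
have w_orth (i j : 'I_(size ws)) : i != j -> w i *m w j = 0.
  move/(pairwiseP 0): orth => orth.
  have lt_orth (a b : 'I_(size ws)) : (a < b)%N -> w a *m w b = 0.
    by move=> ab; apply/eqP/(orth a b (ltn_ord a) (ltn_ord b) ab).
  rewrite neq_ltn => /orP[/lt_orth // | /lt_orth ji].
  have [[[_ hi] _ _] [[_ hj] _ _]] := (wP i, wP j).
  by rewrite -(mxadjM_herm hj hi) ji mxadj0.
exists (size ws), w; split=> [i | // | i | i | X X0]; try by case: (wP i).
have -> : X = 1%:M *m (X *m 1%:M) by rewrite mul1mx mulmx1.
rewrite -sum1 (big_nth 0) big_mkord.
rewrite mulmx_sumr mulmx_suml linear_sum big1 // => i _.
rewrite mulmx_sumr linear_sum big1 // => j _.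
have [hWi iWi _] := wP i.
have [<- | ij] := eqVneq i j.
  rewrite mulmxA (_ : w i *m X *m w i = 0) ?linear0 //.
  by apply: mxtrace_mul_adj_eq0; rewrite mxtrace_corner // X0.
have -> : w i *m (X *m w j) = w i *m (X *m w j) *m (1%:M - w i).
  by rewrite mulmxBr mulmx1 -!mulmxA w_orth 1?eq_sym // !mulmx0 subr0.
exact: (T_reducing hWi iWi).1.
Qed.

End Decomposition.

Unset Implicit Arguments.

Theorem mainTheorem6 (C : numClosedFieldType) (k m : nat) (g : 'M[C]_(k * m)) :
  psd g -> psd (ptrans g) -> CR g.
Proof.
move=> pg pgT; split=> //; split; first exact: FGmap_selfadjoint.
split; first exact: FGmap_positive.
apply: (@reducing_orthogonal_decomposition _ _ (Fmap g \o Gmap g)) => W hW iW.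
exact: invariant_corner_reducing.
Qed.
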